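(* Let $t\geq 5$ and let $H_t$ be the graph with vertices $u,v,w,b,a_1,\dots,a_{t-3}$ and edges $ua_i$ and $a_iv$ for $i=1,\dots,t-3$, edges $ub$ and $bw$, and two parallel edges joining $v$ and $w$. Then $L(H_t)$ has a $K_t$-minor but no $K_t$-immersion.
   Context: Graphs are finite and may have parallel edges but no loops. $L(H)$ is the simple graph with vertex set $E(H)$ in which two distinct edges of $H$ are adjacent iff they share at least one endpoint. A graph $G$ has a $K_t$-immersion if there is an injective map $\phi$ from the vertex set of $K_t$ to $V(G)$ and, for each pair $u\neq v$ of vertices of $K_t$, a path in $G$ joining $\phi(u)$ and $\phi(v)$, such that these paths are pairwise edge-disjoint. $G$ has a $K_t$-minor if $K_t$ can be obtained from a subgraph of $G$ by contracting edges. *)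

From mathcomp Require Import all_boot.
Set Implicit Arguments. Unset Strict Implicit. Unset Printing Implicit Defensive.

Definition pedges (T : eqType) (x : T) (p : seq T) : seq (T * T) := zip (x :: p) p.

Definition is_path (T : finType) (adj : rel T) (x y : T) (p : seq T) : bool :=
  [&& path adj x p, last x p == y & uniq (x :: p)].

Definition edge_disjoint (T : eqType) (x : T) (p : seq T) (y : T) (q : seq T) : bool :=
  all (fun e => (e \notin pedges y q) && ((e.2, e.1) \notin pedges y q)) (pedges x p).

Definition has_K_immersion (T : finType) (adj : rel T) (t : nat) : Prop :=
  exists (phi : 'I_t -> T) (P : 'I_t -> 'I_t -> seq T),
    injective phi /\
    (forall i j : 'I_t, i < j -> is_path adj (phi i) (phi j) (P i j)) /\
    (forall i j k l : 'I_t, i < j -> k < l -> (i, j) != (k, l) ->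
        edge_disjoint (phi i) (P i j) (phi k) (P k l)).

Definition has_K_minor (T : finType) (adj : rel T) (t : nat) : Prop :=
  exists B : 'I_t -> {set T},
    (forall i, B i != set0) /\
    (forall i j, i != j -> [disjoint B i & B j]) /\
    (forall i, {in B i &, forall x y,
        connect [rel a b | [&& adj a b, a \in B i & b \in B i]] x y}) /\
    (forall i j, i != j -> exists x y, [/\ x \in B i, y \in B j & adj x y]).

Definition Hu := 0. Definition Hv := 1. Definition Hw := 2. Definition Hb := 3.
Definition Ha (i : nat) := 4 + i.

(* Edges of H_t (a finite type, so parallel edges are distinct elements):
     inl (inl i)       = the edge u a_i
     inl (inr i)       = the edge a_i v
     inr (inl false)   = the edge u b
     inr (inl true)    = the edge b w
     inr (inr false), inr (inr true) = the two parallel edges v w *)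
Definition HE (t : nat) : finType := (('I_(t - 3) + 'I_(t - 3)) + (bool + bool))%type.

Definition Hends (t : nat) (e : HE t) : nat * nat :=
  match e with
  | inl (inl i) => (Hu, Ha i)
  | inl (inr i) => (Ha i, Hv)
  | inr (inl false) => (Hu, Hb)
  | inr (inl true) => (Hb, Hw)
  | inr (inr _) => (Hv, Hw)
  end.

Definition Hinc (t : nat) (e : HE t) (x : nat) : bool :=
  ((Hends e).1 == x) || ((Hends e).2 == x).

Definition LH (t : nat) : rel (HE t) :=
  fun e f => (e != f) && (Hinc f (Hends e).1 || Hinc f (Hends e).2).

From mathcomp Require Import all_boot zify.
Set Implicit Arguments. Unset Strict Implicit. Unset Printing Implicit Defensive.

(* Minor: the t - 1 edges at v (the a_i v and the two v w) form a clique of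
   L(H_t); the other edges u a_i, u b, b w are connected through u b and each
   edge at v meets one of them, so contracting them into a single branch set
   yields a K_t-minor.
   Immersion: the t - 1 edge-disjoint paths leaving a branch vertex start with
   distinct edges, so every branch vertex has degree at least t - 1.  An edge
   xy of H_t has degree at most d(x) + d(y) - 2 in L(H_t), which is at most
   t - 2 unless the edge is incident with v (for b w this is 3 <= t - 2, where
   t >= 5 is needed).  Hence all t branch vertices would be among the t - 1
   edges at v. *)

Section Walks.
Variable T : eqType.

Definition traverses (x : T) (p : seq T) (a b : T) : bool :=
  ((a, b) \in pedges x p) || ((b, a) \in pedges x p).

Lemma edge_disjoint_traverses x p y q a b :
  edge_disjoint x p y q -> traverses x p a b -> ~~ traverses y q a b.
Proof.
move=> /allP disj /orP[] /disj /andP[/negbTE n1 /negbTE n2];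
  by rewrite /traverses n1 n2.
Qed.

Lemma mem_pedges_rel (r : rel T) (x : T) p a b :
  path r x p -> (a, b) \in pedges x p -> r a b.
Proof.
elim: p x => [|y p IHp] x //= /andP[rxy ryp].
by rewrite /pedges /= in_cons => /orP[/eqP[-> ->] // | /(IHp y ryp)].
Qed.

Lemma pedges_first (x y : T) p : (x, y) \in pedges x (y :: p).
Proof. exact: mem_head. Qed.

Lemma pedges_last (x : T) p : p != [::] -> exists z, (z, last x p) \in pedges x p.
Proof.
elim: p x => [|y [|z p] IHp] x // _; first by exists x; exact: mem_head.
by have [z' hz'] := IHp y isT; exists z'; rewrite /pedges /= in_cons hz' orbT.
Qed.

End Walks.

Section Immersion.
Variables (T : finType) (adj : rel T).

Definition nbhd (x : T) : {set T} := [set y | adj x y || adj y x].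

Lemma is_path_first_edge x y p :
  is_path adj x y p -> x != y -> exists2 z, z \in nbhd x & traverses x p x z.
Proof.
case: p => [|z p] /and3P[xp /eqP /= xy _]; first by rewrite xy eqxx.
case/andP: xp => xz _ _; exists z; first by rewrite inE xz.
by rewrite /traverses pedges_first.
Qed.

Lemma is_path_last_edge x y p :
  is_path adj x y p -> x != y -> exists2 z, z \in nbhd y & traverses x p y z.
Proof.
case/and3P=> xp /eqP <- _ ne_x_last.
have [|z zl] := pedges_last x (p := p); first by apply: contraNneq ne_x_last => ->.
exists z; last by rewrite /traverses zl orbT.
by rewrite inE (mem_pedges_rel xp zl) orbT.
Qed.

Lemma K_immersion_branch_deg t (phi : 'I_t -> T) (P : 'I_t -> 'I_t -> seq T) :
  injective phi ->
  (forall i j : 'I_t, i < j -> is_path adj (phi i) (phi j) (P i j)) ->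
  (forall i j k l : 'I_t, i < j -> k < l -> (i, j) != (k, l) ->
     edge_disjoint (phi i) (P i j) (phi k) (P k l)) ->
  forall i, t.-1 <= #|nbhd (phi i)|.
Proof.
move=> phi_inj Ppath Pdisj i.
(* P (pr j).1 (pr j).2 is the path joining phi i and phi j *)
pose pr (j : 'I_t) := if i < j then (i, j) else (j, i).
have pr_lt j : j != i -> (pr j).1 < (pr j).2.
  move=> ji; rewrite /pr; case: (ltngtP i j) => //= eq_ij.
  by move: ji; rewrite (val_inj eq_ij) eqxx.
have pr_inj : {in [set~ i] &, injective pr}.
  move=> j k; rewrite !in_setC1 /pr => ji ki.
  case: ifP => _; case: ifP => _ [] //.
  - by move=> ik _; rewrite ik eqxx in ki.
  - by move=> eji _; rewrite eji eqxx in ji.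
have at_branch j : exists z, j != i ->
    (z \in nbhd (phi i)) && traverses (phi (pr j).1) (P (pr j).1 (pr j).2) (phi i) z.
  have [_|ji] := eqVneq j i; first by exists (phi i).
  have path_j := Ppath _ _ (pr_lt j ji).
  have ne : phi (pr j).1 != phi (pr j).2.
    by rewrite (inj_eq phi_inj); apply: contraTneq (pr_lt j ji) => ->; rewrite ltnn.
  rewrite /pr in path_j ne *; case: ifP path_j ne => _ path_j ne.
  - by have [z zN tz] := is_path_first_edge path_j ne; exists z => _; rewrite zN.
  - by have [z zN tz] := is_path_last_edge path_j ne; exists z => _; rewrite zN.
have [f fP] := fin_all_exists at_branch.
have f_inj : {in [set~ i] &, injective f}.
  move=> j k ji ki fjk; apply: pr_inj => //; apply/eqP/negPn/negP => ne_pr.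
  rewrite !in_setC1 in ji ki.
  have /andP[_ tj] := fP j ji; have /andP[_ tk] := fP k ki.
  have ne_pairs : ((pr j).1, (pr j).2) != ((pr k).1, (pr k).2).
    by rewrite -!surjective_pairing.
  have := edge_disjoint_traverses (Pdisj _ _ _ _ (pr_lt j ji) (pr_lt k ki) ne_pairs) tj.
  by rewrite fjk tk.
have f_nbhd : f @: [set~ i] \subset nbhd (phi i).
  by apply/subsetP => _ /imsetP[j ji ->]; rewrite in_setC1 in ji; case/andP: (fP j ji).
by have := subset_leq_card f_nbhd; rewrite card_in_imset // cardsC1 card_ord.
Qed.

Lemma K_immersion_high_deg t :
  has_K_immersion adj t -> t <= #|[set x | t.-1 <= #|nbhd x|]|.
Proof.
case=> phi [P [phi_inj [Ppath Pdisj]]].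
rewrite -{1}[t]card_ord -cardsT -(card_imset _ phi_inj); apply: subset_leq_card.
apply/subsetP => _ /imsetP[i _ ->]; rewrite inE.
exact: K_immersion_branch_deg Pdisj i.
Qed.

End Immersion.

Section Contraction.
Variables (T : finType) (adj : rel T).

Definition induced (A : {set T}) : rel T := [rel x y | [&& adj x y, x \in A & y \in A]].

Lemma K_minor_of_contraction t (f : T -> nat) :
  (forall i : 'I_t, exists x, f x = i) ->
  (forall x y, f x = f y -> connect (induced [set z | f z == f x]) x y) ->
  (forall i j : 'I_t, i != j -> exists x y, [/\ f x = i, f y = j & adj x y]) ->
  has_K_minor adj t.
Proof.
move=> f_onto f_connected f_adj.
exists (fun i : 'I_t => [set x | f x == i]); split; [|split; [|split]].
- by move=> i; apply/set0Pn; have [x fx] := f_onto i; exists x; rewrite inE fx.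
- move=> i j ij; rewrite -setI_eq0; apply/eqP/setP => x; rewrite !inE.
  by apply/negP => /andP[/eqP-> /eqP/val_inj eq_ij]; rewrite eq_ij eqxx in ij.
- move=> i x y; rewrite !inE => /eqP fx /eqP fy.
  by have := f_connected x y (etrans fx (esym fy)); rewrite fx.
- move=> i j /f_adj[x [y [fx fy xy]]]; exists x, y.
  by rewrite !inE fx fy !eqxx.
Qed.

End Contraction.

Section LineGraph.
Variables (V : eqType) (E : finType) (ends : E -> V * V).

Definition incident (e : E) (x : V) : bool := ((ends e).1 == x) || ((ends e).2 == x).

Definition line_adj : rel E :=
  fun e f => (e != f) && (incident f (ends e).1 || incident f (ends e).2).

Definition edge_deg (x : V) : nat := #|[set e | incident e x]|.

Lemma edge_degE x : edge_deg x = \sum_e incident e x.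
Proof.
by rewrite /edge_deg -sum1dep_card big_mkcond; apply: eq_bigr => e _; case: incident.
Qed.

Lemma line_adjC : symmetric line_adj.
Proof.
move=> e f; rewrite /line_adj /incident eq_sym.
case: (ends e) (ends f) => [a b] [c d] /=.
by rewrite (eq_sym c) (eq_sym d) (eq_sym c b) (eq_sym d b); do 4 case: eqP.
Qed.

Lemma card_line_nbhd e :
  #|[set f | line_adj e f]| <= (edge_deg (ends e).1).-1 + (edge_deg (ends e).2).-1.
Proof.
pose S x := [set f | incident f x] :\ e.
have S_card x : incident e x -> #|S x| = (edge_deg x).-1.
  by move=> ex; rewrite /edge_deg [in RHS](cardsD1 e) in_set ex.
rewrite -!S_card /incident ?eqxx ?orbT //.
apply: leq_trans (leq_card_setU _ _).1; apply: subset_leq_card.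
apply/subsetP => f; rewrite !inE /line_adj eq_sym => /andP[-> /orP[]] ->;
  by rewrite ?orbT.
Qed.

End LineGraph.

Lemma sum_ord_eqn n i : i < n -> \sum_(k < n) (k == i :> nat) = 1.
Proof.
move=> lt_in; rewrite (bigD1 (Ordinal lt_in)) //= eqxx big1 // => k.
by rewrite -(inj_eq val_inj) /= => /negbTE ->.
Qed.

Section Ht.
Variable t : nat.
Hypothesis t_ge5 : 5 <= t.

Lemma LHC : symmetric (@LH t).
Proof. exact: line_adjC. Qed.

Lemma nbhd_LH (e : HE t) : nbhd (@LH t) e = [set f | LH e f].
Proof. by apply/setP => f; rewrite !inE LHC orbb. Qed.

Lemma HdegE x : edge_deg (@Hends t) x =
  \sum_(k < t - 3) ((Hu == x) || (Ha k == x))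
  + \sum_(k < t - 3) ((Ha k == x) || (Hv == x))
  + ((Hb == x) || (Hw == x)) + ((Hu == x) || (Hb == x)) + ((Hv == x) || (Hw == x)).*2.
Proof. by rewrite edge_degE !big_sumType !big_bool /= -addnn !addnA. Qed.

Lemma Hdeg_uvwb x : x < 4 -> edge_deg (@Hends t) x =
  (t - 3) * ((Hu == x) + (Hv == x))
  + ((Hb == x) || (Hw == x)) + ((Hu == x) || (Hb == x)) + ((Hv == x) || (Hw == x)).*2.
Proof.
move=> x_lt4; have Ha_x k : (Ha k == x) = false by apply/eqP; rewrite /Ha; lia.
rewrite HdegE (eq_bigr (fun=> (Hu == x : nat))) => [|k _]; last by rewrite Ha_x orbF.
rewrite sum_nat_const card_ord (eq_bigr (fun=> (Hv == x : nat))) => [|k _].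
  by rewrite sum_nat_const card_ord mulnDr.
by rewrite Ha_x.
Qed.

Lemma Hdeg_a i : i < t - 3 -> edge_deg (@Hends t) (Ha i) = 2.
Proof.
move=> lt_i; have Hv_a : (Hv == Ha i) = false by apply/eqP; rewrite /Hv /Ha; lia.
pose is_i (k : 'I_(t - 3)) : nat := (k == i :> nat).
rewrite HdegE /= Hv_a (eq_bigr is_i) => [|k _].
  rewrite sum_ord_eqn // (eq_bigr is_i) => [|k _]; first by rewrite sum_ord_eqn.
  by rewrite orbF eqn_add2l.
by rewrite eqn_add2l.
Qed.

Lemma card_nbhd_nonv (e : HE t) : ~~ Hinc e Hv -> #|nbhd (@LH t) e| <= t - 2.
Proof.
rewrite nbhd_LH => ev; apply: leq_trans (card_line_nbhd _ e) _.
case: e ev => [[k|k]|[[]|[]]] //= _; rewrite ?Hdeg_a ?Hdeg_uvwb //=; lia.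
Qed.

Lemma card_v_edges : #|[set e : HE t | Hinc e Hv]| = t - 1.
Proof. by rewrite -[LHS]/(edge_deg _ Hv) Hdeg_uvwb //=; lia. Qed.

Lemma high_deg_v_edges :
  [set e | t.-1 <= #|nbhd (@LH t) e|] \subset [set e : HE t | Hinc e Hv].
Proof.
apply/subsetP => e; rewrite !inE; apply: contraTT => /card_nbhd_nonv le_deg.
by rewrite -ltnNge; apply: leq_ltn_trans le_deg _; lia.
Qed.

Definition Hbranch (e : HE t) : nat :=
  match e with
  | inl (inr k) => k
  | inr (inr false) => t - 3
  | inr (inr true) => t - 2
  | _ => t - 1
  end.

Lemma Hbranch_last e : (Hbranch e == t - 1) = ~~ Hinc e Hv.
Proof.
case: e => [[k|k]|[[]|[]]]; rewrite /Hinc /Hv /Ha /= ?eqxx //; apply/eqP.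
all: try have := ltn_ord k; lia.
Qed.

Lemma Hbranch_inj e f : Hinc e Hv -> Hbranch e = Hbranch f -> e = f.
Proof.
move=> e_v ef; have : Hbranch f != t - 1 by rewrite -ef Hbranch_last e_v.
case: e f ef {e_v} => [[k|k]|[[]|[]]] [[k'|k']|[[]|[]]] //=; try have := ltn_ord k;
  try have := ltn_ord k'; try lia.
by move=> _ _ /val_inj ->.
Qed.

Lemma Hbranch_v_edge j : j < t - 1 -> exists2 e, Hinc e Hv & Hbranch e = j.
Proof.
move=> lt_j; case: (ltnP j (t - 3)) => [lt_j3 | ge_j3].
  by exists (inl (inr (Ordinal lt_j3))); rewrite /Hinc ?eqxx ?orbT.
have [->|->] : j = t - 3 \/ j = t - 2 by lia.
- by exists (inr (inr false)).
- by exists (inr (inr true)).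
Qed.

Lemma LH_v_edges (e f : HE t) : Hinc e Hv -> Hinc f Hv -> e != f -> LH e f.
Proof. by rewrite /LH /Hinc => /orP[] /eqP-> /orP[] -> ->; rewrite ?orbT. Qed.

Lemma v_edge_nonv_nbr (e : HE t) : Hinc e Hv -> exists2 f, ~~ Hinc f Hv & LH e f.
Proof.
case: e => [[k|k]|[[]|[]]] // _.
- exists (inl (inl k)); last by rewrite /LH /Hinc /= eqxx.
  by rewrite /Hinc /Hv /Ha /=; apply/negP => /eqP; lia.
- by exists (inr (inl true)).
- by exists (inr (inl true)).
Qed.

Lemma nonv_ub_adj (e : HE t) :
  ~~ Hinc e Hv -> e != inr (inl false) -> LH e (inr (inl false)).
Proof. by case: e => [[k|k]|[[]|[]]]. Qed.

Lemma Hbranch_onto (i : 'I_t) : exists e, Hbranch e = i.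
Proof.
case: (ltnP i (t - 1)) => [/Hbranch_v_edge[e _ <-] | ge_i]; first by exists e.
by exists (inr (inl false)); have := ltn_ord i; rewrite /=; lia.
Qed.

Lemma Hbranch_connected e f :
  Hbranch e = Hbranch f -> connect (induced (@LH t) [set g | Hbranch g == Hbranch e]) e f.
Proof.
move=> ef; have [e_v | e_nonv] := boolP (Hinc e Hv).
  by rewrite (Hbranch_inj e_v ef) connect0.
set R := induced _ _; set ub : HE t := inr (inl false).
have e_last : Hbranch e = t - 1 by apply/eqP; rewrite Hbranch_last.
have ub_fiber g : ~~ Hinc g Hv -> g \in [set g | Hbranch g == Hbranch e].
  by rewrite inE e_last Hbranch_last.
have to_ub g : ~~ Hinc g Hv -> connect R g ub /\ connect R ub g.
  move=> g_nonv; have [-> | ne_ub] := eqVneq g ub; first by rewrite connect0.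
  have gub : LH g ub := nonv_ub_adj g_nonv ne_ub.
  have ubg : LH ub g by rewrite LHC.
  by split; apply: connect1; rewrite /R /induced /= ?gub ?ubg !ub_fiber.
have f_nonv : ~~ Hinc f Hv by rewrite -Hbranch_last -ef e_last.
exact: connect_trans (to_ub e e_nonv).1 (to_ub f f_nonv).2.
Qed.

Lemma Hbranch_adj (i j : 'I_t) :
  i != j -> exists e f, [/\ Hbranch e = i, Hbranch f = j & LH e f].
Proof.
wlog lt_ij : i j / i < j => [hw ne_ij | _].
  have ne_ji : j != i by rewrite eq_sym.
  case: (ltngtP i j) => [/hw/(_ ne_ij) // | /hw/(_ ne_ji) | /val_inj eq_ij].
  - by case=> e [f [ej fi ef]]; exists f, e; rewrite LHC.
  - by rewrite eq_ij eqxx in ne_ij.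
have lt_i : i < t - 1 by have := ltn_ord j; lia.
have [e e_v ei] := Hbranch_v_edge lt_i.
case: (ltnP j (t - 1)) => [lt_j | ge_j].
  have [f f_v fj] := Hbranch_v_edge lt_j.
  exists e, f; split => //; apply: LH_v_edges => //.
  by apply: contraTneq lt_ij => ef; rewrite -ei -fj ef ltnn.
have [f f_nonv ef] := v_edge_nonv_nbr e_v.
exists e, f; split => //; have -> : nat_of_ord j = t - 1 by have := ltn_ord j; lia.
by apply/eqP; rewrite Hbranch_last.
Qed.

Lemma LH_K_minor : has_K_minor (@LH t) t.
Proof. exact: K_minor_of_contraction Hbranch_onto Hbranch_connected Hbranch_adj. Qed.

End Ht.

Theorem mainTheorem7 (t : nat) (ht : 5 <= t) :
  has_K_minor (@LH t) t /\ ~ has_K_immersion (@LH t) t.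
Proof.
split; first exact: LH_K_minor.
move=> /K_immersion_high_deg many_high.
have := leq_trans many_high (subset_leq_card (high_deg_v_edges ht)).
by rewrite (card_v_edges ht); lia.
Qed.
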